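(* Let $f_0,f_1\in \mathrm{PL}_0(\mathbf{I})$ and let $(a,c)$ be an orbital of $f_0$ that is not an orbital of $f_1$. Assume that every orbital $B$ of $f_1$ satisfies either $B\subseteq(a,c)$ or $B\cap(a,c)=\emptyset$. Let $(b_1,d_1),\dots,(b_n,d_n)$, with $n\ge1$, be all the orbitals of $f_1$ properly contained in $(a,c)$, in increasing order. Suppose that either (Up) $(a,c)$ is an up-bump of $f_0$ and: $a<b_1$; there is $p<c$ with $f_0|_{[p,c]}=f_1|_{[p,c]}$; $d_n=c$; if $p$ is the minimal such point then $b_nf_0\ge p$; and $b_1f_0>b_n$; or (Down) $(a,c)$ is a down-bump of $f_0$ and: $d_n<c$; there is $\rho>a$ with $f_0|_{[a,\rho]}=f_1|_{[a,\rho]}$; $b_1=a$; if $\rho$ is the maximal such point then $d_1f_0\le\rho$; and $d_nf_0<d_1$. Then $[f_0f_1^{-1},f_1^{f_0^2}]|_{[a,c]}=1$.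
   Context: $\mathrm{PL}_0(\mathbf{I})$ is the group of orientation-preserving piecewise-linear homeomorphisms of $[0,1]$ with finitely many points of non-differentiability. Functions act on the right: $tf=f(t)$, $fg=g\circ f$, $a^b=b^{-1}ab$, $[a,b]=aba^{-1}b^{-1}$. The orbitals of $f$ are the connected components (open intervals) of $\operatorname{Supp}(f)=\{x: xf\ne x\}$; an orbital $A$ is an up-bump (resp. down-bump) if $xf>x$ (resp. $xf<x$) for all $x\in A$. *)

(* concrete reals R. Functions act on the right: t f = f t. *)
From Stdlib Require Import Reals Lra Lia.
Open Scope R_scope.

Definition affine_on (f : R -> R) (u v : R) : Prop :=
  exists m q : R, forall x, u <= x <= v -> f x = m * x + q.

(* PL_0(I): orientation-preserving PL homeomorphism of [0,1] with finitely
   many breakpoints.  Values outside [0,1] are irrelevant. *)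
Definition PL0 (f : R -> R) : Prop :=
  f 0 = 0 /\ f 1 = 1 /\
  (forall x y, 0 <= x -> x < y -> y <= 1 -> f x < f y) /\
  exists (k : nat) (t : nat -> R),
    t 0%nat = 0 /\ t k = 1 /\
    (forall i, (i < k)%nat -> t i < t (S i)) /\
    (forall i, (i < k)%nat -> affine_on f (t i) (t (S i))).

Definition inverse_on_I (f g : R -> R) : Prop :=
  forall x, 0 <= x <= 1 -> g (f x) = x /\ f (g x) = x.

Definition in_supp (f : R -> R) (x : R) : Prop := 0 <= x <= 1 /\ f x <> x.

(* (u,v) is an orbital of f: a connected component of Supp f, i.e. an open
   interval contained in Supp f whose endpoints are not in Supp f. *)
Definition orbital (f : R -> R) (u v : R) : Prop :=
  0 <= u /\ u < v /\ v <= 1 /\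
  (forall x, u < x < v -> in_supp f x) /\
  ~ in_supp f u /\ ~ in_supp f v.

Definition up_bump (f : R -> R) (u v : R) : Prop :=
  orbital f u v /\ forall x, u < x < v -> f x > x.

Definition down_bump (f : R -> R) (u v : R) : Prop :=
  orbital f u v /\ forall x, u < x < v -> f x < x.

Definition agree_on (f g : R -> R) (u v : R) : Prop :=
  forall x, u <= x <= v -> f x = g x.

(* Right action: t (x y) = (t x) y.  Commutator [x,y] = x y x^-1 y^-1,
   so t [x,y] = yi (xi (y (x t))). *)
Definition comm_act (x xi y yi : R -> R) (t : R) : R := yi (xi (y (x t))).

From Stdlib Require Import Reals Lra Lia Classical.
Open Scope R_scope.

(* Write x = f0 f1^-1 and y = f1^(f0^2).  In the Up case let p be the least
   point with f0 = f1 on [p,c] and P = max(a,p).  Then x is the identity on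
   [P,c], while y is the identity on [a, b_1 f0^2) because f1 fixes [a, b_1);
   and b_n f0 >= p, b_1 f0 > b_n give P <= b_n f0 < b_1 f0^2.  So on [a,c] the
   supports of x and y lie on opposite sides of P, each element preserving the
   other's side, and the commutator is trivial there.  The Down case is the
   mirror image, splitting [a,c] at min(c, rho) > d_n f0^2.
   Continuity is only needed for the existence of the extremal points p, rho
   and of the orbital around a moved point; it is replaced by the fact that
   two PL maps agreeing at points accumulating at x agree at x, their pieces
   ending at x being affine. *)

Lemma sup_approx (E : R -> Prop) :
  (exists z, E z) -> (exists U, forall z, E z -> z <= U) ->
  exists m, (forall z, E z -> z <= m) /\ (forall e, e < m -> exists z, E z /\ e < z).
Proof.
  intros Hne Hbd.
  destruct (completeness E Hbd Hne) as [m [Hub Hleast]].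
  exists m. split; [exact Hub|].
  intros e He. apply NNPP. intros Hno.
  enough (m <= e) by lra.
  apply Hleast. intros z Hz.
  destruct (Rle_or_lt z e) as [Hze|Hze]; [exact Hze|].
  exfalso. apply Hno. exists z. auto.
Qed.

Lemma inf_approx (E : R -> Prop) :
  (exists z, E z) -> (exists L, forall z, E z -> L <= z) ->
  exists m, (forall z, E z -> m <= z) /\ (forall e, m < e -> exists z, E z /\ z < e).
Proof.
  intros [z0 Hz0] [L HL].
  destruct (sup_approx (fun w => E (- w))) as [m [Hub Happrox]].
  - exists (- z0). now rewrite Ropp_involutive.
  - exists (- L). intros w Hw. specialize (HL _ Hw). lra.
  - exists (- m). split.
    + intros z Hz. enough (- z <= m) by lra. apply Hub. now rewrite Ropp_involutive.
    + intros e He. destruct (Happrox (- e) ltac:(lra)) as [w [Hw Hew]].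
      exists (- w). split; [exact Hw|lra].
Qed.

Lemma sorted_locate_left (t : nat -> R) (k : nat) (x : R) :
  (forall i, (i < k)%nat -> t i < t (S i)) -> t 0%nat < x -> x <= t k ->
  exists i, (i < k)%nat /\ t i < x <= t (S i).
Proof.
  induction k as [|k IH]; intros Hinc H0 Hk; [lra|].
  destruct (Rle_or_lt x (t k)) as [Hxk|Hxk].
  - destruct IH as [i [Hi Hti]]; auto. exists i. split; [lia|exact Hti].
  - exists k. split; [lia|lra].
Qed.

Lemma sorted_locate_right (t : nat -> R) (k : nat) (x : R) :
  (forall i, (i < k)%nat -> t i < t (S i)) -> t 0%nat <= x -> x < t k ->
  exists i, (i < k)%nat /\ t i <= x < t (S i).
Proof.
  induction k as [|k IH]; intros Hinc H0 Hk; [lra|].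
  destruct (Rlt_or_le x (t k)) as [Hxk|Hxk].
  - destruct IH as [i [Hi Hti]]; auto. exists i. split; [lia|exact Hti].
  - exists k. split; [lia|lra].
Qed.

Lemma affine_on_sub (f : R -> R) (u v u' v' : R) :
  affine_on f u v -> u <= u' -> v' <= v -> affine_on f u' v'.
Proof.
  intros [m [q Hf]] Hu Hv. exists m, q. intros x Hx. apply Hf. lra.
Qed.

Lemma affine_on_agree (f g : R -> R) (u v w1 w2 : R) :
  affine_on f u v -> affine_on g u v -> u <= w1 -> w1 < w2 -> w2 <= v ->
  f w1 = g w1 -> f w2 = g w2 -> agree_on f g u v.
Proof.
  intros [m1 [q1 Hf]] [m2 [q2 Hg]] Hu Hw Hv Hw1 Hw2 x Hx.
  rewrite Hf, Hg in Hw1, Hw2 by lra. rewrite Hf, Hg by lra.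
  assert (Hm : m1 = m2) by nra.
  subst m2. lra.
Qed.

Lemma affine_on_onto (f : R -> R) (u v y : R) :
  affine_on f u v -> u <= v -> f u <= y <= f v -> exists x, u <= x <= v /\ f x = y.
Proof.
  intros [m [q Hf]] Huv Hy.
  destruct (Req_dec (f u) y) as [Hu|Hu]; [exists u; split; [lra|exact Hu]|].
  rewrite Hf in Hu, Hy by lra. rewrite (Hf v) in Hy by lra.
  assert (Hm : 0 < m) by nra.
  set (x := (y - q) / m).
  assert (Hx : m * x + q = y) by (unfold x; field; lra).
  exists x. split; [split; nra|]. rewrite Hf; [exact Hx|split; nra].
Qed.

Lemma PL0_id : PL0 (fun s => s).
Proof.
  split; [reflexivity|]. split; [reflexivity|]. split; [intros; lra|].
  exists 1%nat, INR. split; [reflexivity|]. split; [reflexivity|].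
  split; intros i Hi; replace i with 0%nat by lia; simpl.
  - lra.
  - exists 1, 0. intros x _. ring.
Qed.

Lemma PL0_lt (f : R -> R) (x y : R) : PL0 f -> 0 <= x -> x < y -> y <= 1 -> f x < f y.
Proof. intros [_ [_ [Hinc _]]]. apply Hinc. Qed.

Lemma PL0_piece_left (f : R -> R) (x : R) :
  PL0 f -> 0 < x <= 1 -> exists u, u < x /\ affine_on f u x.
Proof.
  intros [_ [_ [_ [k [t [H0 [Hk [Hinc Haff]]]]]]]] Hx.
  destruct (sorted_locate_left t k x Hinc) as [i [Hi Hti]]; [lra|lra|].
  exists (t i). split; [lra|]. apply (affine_on_sub f (t i) (t (S i))); auto; lra.
Qed.

Lemma PL0_piece_right (f : R -> R) (x : R) :
  PL0 f -> 0 <= x < 1 -> exists v, x < v /\ affine_on f x v.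
Proof.
  intros [_ [_ [_ [k [t [H0 [Hk [Hinc Haff]]]]]]]] Hx.
  destruct (sorted_locate_right t k x Hinc) as [i [Hi Hti]]; [lra|lra|].
  exists (t (S i)). split; [lra|]. apply (affine_on_sub f (t i) (t (S i))); auto; lra.
Qed.

Lemma PL0_agree_of_left_accumulation (f g : R -> R) (x : R) :
  PL0 f -> PL0 g -> 0 <= x <= 1 ->
  (forall e, e < x -> exists w, 0 <= w /\ e < w <= x /\ f w = g w) -> f x = g x.
Proof.
  intros Hf Hg Hx Hacc.
  destruct (Req_dec x 0) as [Hx0|Hx0].
  { destruct (Hacc (-1)) as [w [Hw0 [Hw Hfg]]]; [lra|].
    replace x with w by lra. exact Hfg. }
  destruct (PL0_piece_left f x Hf ltac:(lra)) as [uf [Huf Haf]].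
  destruct (PL0_piece_left g x Hg ltac:(lra)) as [ug [Hug Hag]].
  set (u := Rmax uf ug).
  assert (Hu : u < x) by (apply Rmax_lub_lt; lra).
  destruct (Hacc u Hu) as [w1 [_ [Hw1 Hfg1]]].
  destruct (Req_dec w1 x) as [<-|Hw1x]; [exact Hfg1|].
  destruct (Hacc w1 ltac:(lra)) as [w2 [_ [Hw2 Hfg2]]].
  apply (affine_on_agree f g u x w1 w2); try lra.
  - apply (affine_on_sub f uf x); [exact Haf|apply Rmax_l|lra].
  - apply (affine_on_sub g ug x); [exact Hag|apply Rmax_r|lra].
Qed.

Lemma PL0_agree_of_right_accumulation (f g : R -> R) (x : R) :
  PL0 f -> PL0 g -> 0 <= x <= 1 ->
  (forall e, x < e -> exists w, w <= 1 /\ x <= w < e /\ f w = g w) -> f x = g x.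
Proof.
  intros Hf Hg Hx Hacc.
  destruct (Req_dec x 1) as [Hx1|Hx1].
  { destruct (Hacc 2) as [w [Hw1 [Hw Hfg]]]; [lra|].
    replace x with w by lra. exact Hfg. }
  destruct (PL0_piece_right f x Hf ltac:(lra)) as [vf [Hvf Haf]].
  destruct (PL0_piece_right g x Hg ltac:(lra)) as [vg [Hvg Hag]].
  set (v := Rmin vf vg).
  assert (Hv : x < v) by (apply Rmin_glb_lt; lra).
  destruct (Hacc v Hv) as [w2 [_ [Hw2 Hfg2]]].
  destruct (Req_dec w2 x) as [->|Hw2x]; [exact Hfg2|].
  destruct (Hacc w2 ltac:(lra)) as [w1 [_ [Hw1 Hfg1]]].
  destruct (Req_dec w1 x) as [->|Hw1x]; [exact Hfg1|].
  apply (affine_on_agree f g x v w1 w2); try lra.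
  - apply (affine_on_sub f x vf); [exact Haf|lra|apply Rmin_l].
  - apply (affine_on_sub g x vg); [exact Hag|lra|apply Rmin_r].
Qed.

Lemma PL0_orbital_around (f : R -> R) (s : R) :
  PL0 f -> 0 <= s <= 1 -> f s <> s -> exists u v, orbital f u v /\ u < s < v.
Proof.
  intros Hf Hs Hfs. pose proof Hf as [Hf0 [Hf1 _]].
  destruct (sup_approx (fun z => 0 <= z <= s /\ f z = z)) as [u [Hub Hu]].
  { exists 0. split; [lra|exact Hf0]. }
  { exists s. intros z Hz. lra. }
  destruct (inf_approx (fun z => s <= z <= 1 /\ f z = z)) as [v [Hlb Hv]].
  { exists 1. split; [lra|exact Hf1]. }
  { exists s. intros z Hz. lra. }
  assert (Hu0 : 0 <= u) by (apply Hub; split; [lra|exact Hf0]).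
  assert (Hus : u <= s).
  { destruct (Rle_or_lt u s) as [H|H]; [exact H|].
    destruct (Hu s H) as [z [Hz Hsz]]. lra. }
  assert (Hv1 : v <= 1) by (apply Hlb; split; [lra|exact Hf1]).
  assert (Hsv : s <= v).
  { destruct (Rle_or_lt s v) as [H|H]; [exact H|].
    destruct (Hv s H) as [z [Hz Hzs]]. lra. }
  assert (Hfu : f u = u).
  { apply (PL0_agree_of_left_accumulation f (fun z => z)); [exact Hf|exact PL0_id|lra|].
    intros e He. destruct (Hu e He) as [z [Hz Hez]].
    assert (z <= u) by (apply Hub; exact Hz).
    exists z. split; [lra|]. split; [lra|]. apply Hz. }
  assert (Hfv : f v = v).
  { apply (PL0_agree_of_right_accumulation f (fun z => z)); [exact Hf|exact PL0_id|lra|].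
    intros e He. destruct (Hv e He) as [z [Hz Hze]].
    assert (v <= z) by (apply Hlb; exact Hz).
    exists z. split; [lra|]. split; [lra|]. apply Hz. }
  assert (u <> s) by (intros <-; contradiction).
  assert (v <> s) by (intros ->; contradiction).
  exists u, v. split; [|lra].
  split; [lra|]. split; [lra|]. split; [lra|]. split; [|split].
  - intros x Hx. split; [lra|]. intros Hfx. destruct (Rle_or_lt x s).
    + assert (x <= u) by (apply Hub; split; [lra|exact Hfx]). lra.
    + assert (v <= x) by (apply Hlb; split; [lra|exact Hfx]). lra.
  - intros [_ Hnfix]. contradiction.
  - intros [_ Hnfix]. contradiction.
Qed.

Lemma agree_on_least (f g : R -> R) (p0 c : R) :
  PL0 f -> PL0 g -> 0 <= p0 < c -> c <= 1 -> agree_on f g p0 c ->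
  exists p, 0 <= p < c /\ agree_on f g p c /\
    (forall q, 0 <= q -> q < c -> agree_on f g q c -> p <= q).
Proof.
  intros Hf Hg Hp0 Hc Hag0.
  destruct (inf_approx (fun q => 0 <= q < c /\ agree_on f g q c)) as [p [Hlb Happrox]].
  { exists p0. auto. }
  { exists 0. intros z Hz. lra. }
  assert (Hpp0 : p <= p0) by (apply Hlb; auto).
  assert (Hp : 0 <= p).
  { destruct (Rle_or_lt 0 p) as [H|H]; [exact H|].
    destruct (Happrox 0 H) as [z [Hz Hz0]]. lra. }
  assert (Hag : forall x, p < x <= c -> f x = g x).
  { intros x Hx. destruct (Happrox x ltac:(lra)) as [z [[Hz Hagz] Hzx]].
    apply Hagz. lra. }
  exists p. split; [lra|]. split.
  - intros x Hx. destruct (Req_dec x p) as [->|Hxp]; [|apply Hag; lra].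
    apply PL0_agree_of_right_accumulation; auto; [lra|].
    intros e He. destruct (Happrox e He) as [z [[Hz Hagz] Hze]].
    assert (p <= z) by (apply Hlb; auto).
    exists z. split; [lra|]. split; [lra|]. apply Hagz. lra.
  - intros q Hq Hqc Hagq. apply Hlb. auto.
Qed.

Lemma agree_on_greatest (f g : R -> R) (a r0 : R) :
  PL0 f -> PL0 g -> 0 <= a -> a < r0 <= 1 -> agree_on f g a r0 ->
  exists r, a < r <= 1 /\ agree_on f g a r /\
    (forall q, a < q -> q <= 1 -> agree_on f g a q -> q <= r).
Proof.
  intros Hf Hg Ha Hr0 Hag0.
  destruct (sup_approx (fun q => a < q <= 1 /\ agree_on f g a q)) as [r [Hub Happrox]].
  { exists r0. auto. }
  { exists 1. intros z Hz. lra. }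
  assert (Hr0r : r0 <= r) by (apply Hub; auto).
  assert (Hr : r <= 1).
  { destruct (Rle_or_lt r 1) as [H|H]; [exact H|].
    destruct (Happrox 1 H) as [z [Hz Hz1]]. lra. }
  assert (Hag : forall x, a <= x < r -> f x = g x).
  { intros x Hx. destruct (Happrox x ltac:(lra)) as [z [[Hz Hagz] Hxz]].
    apply Hagz. lra. }
  exists r. split; [lra|]. split.
  - intros x Hx. destruct (Req_dec x r) as [->|Hxr]; [|apply Hag; lra].
    apply PL0_agree_of_left_accumulation; auto; [lra|].
    intros e He. destruct (Happrox e He) as [z [[Hz Hagz] Hez]].
    assert (z <= r) by (apply Hub; auto).
    exists z. split; [lra|]. split; [lra|]. apply Hagz. lra.
  - intros q Hq Hq1 Hagq. apply Hub. auto.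
Qed.

Lemma PL0_onto (f : R -> R) (y : R) :
  PL0 f -> 0 <= y <= 1 -> exists x, 0 <= x <= 1 /\ f x = y.
Proof.
  intros [Hf0 [Hf1 [_ [k [t [Ht0 [Htk [Hinc Haff]]]]]]]] Hy.
  assert (Hreach : forall i, (i <= k)%nat -> t 0%nat <= t i /\
            forall z, f (t 0%nat) <= z <= f (t i) -> exists x, t 0%nat <= x <= t i /\ f x = z).
  { induction i as [|i IH]; intros Hi.
    - split; [lra|]. intros z Hz. exists (t 0%nat). split; lra.
    - destruct IH as [Ht0i IH]; [lia|].
      assert (Hti := Hinc i ltac:(lia)).
      split; [lra|]. intros z Hz.
      destruct (Rle_or_lt z (f (t i))) as [Hzi|Hzi].
      + destruct (IH z ltac:(lra)) as [x [Hx Hfx]].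
        exists x. split; [lra|exact Hfx].
      + destruct (affine_on_onto f (t i) (t (S i)) z) as [x [Hx Hfx]];
          [apply Haff; lia|lra|lra|].
        exists x. split; [lra|exact Hfx]. }
  destruct (Hreach k (Nat.le_refl k)) as [_ Honto].
  rewrite Ht0, Htk, Hf0, Hf1 in Honto.
  exact (Honto y Hy).
Qed.

Definition increasing_on_I (h : R -> R) : Prop :=
  forall x y, 0 <= x -> x <= y -> y <= 1 -> 0 <= h x /\ h x <= h y /\ h y <= 1.

Lemma PL0_increasing (f : R -> R) : PL0 f -> increasing_on_I f.
Proof.
  intros Hf x y Hx Hxy Hy. pose proof Hf as [Hf0 [Hf1 _]].
  assert (Hle : forall u v, 0 <= u -> u <= v -> v <= 1 -> f u <= f v).
  { intros u v Hu [Huv|<-] Hv; [left; apply PL0_lt; auto|lra]. }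
  rewrite <- Hf0, <- Hf1. split; [|split]; apply Hle; lra.
Qed.

Lemma inverse_in_I (f g : R -> R) (y : R) :
  PL0 f -> inverse_on_I f g -> 0 <= y <= 1 -> 0 <= g y <= 1.
Proof.
  intros Hf Hg Hy. destruct (PL0_onto f y Hf Hy) as [x [Hx <-]].
  rewrite (proj1 (Hg x Hx)). exact Hx.
Qed.

Lemma inverse_increasing (f g : R -> R) : PL0 f -> inverse_on_I f g -> increasing_on_I g.
Proof.
  intros Hf Hg.
  assert (Hle : forall x y, 0 <= x -> x <= y -> y <= 1 -> g x <= g y).
  { intros x y Hx Hxy Hy.
    destruct (Rle_or_lt (g x) (g y)) as [H|H]; [exact H|exfalso].
    assert (Hgx := inverse_in_I f g x Hf Hg ltac:(lra)).
    assert (Hgy := inverse_in_I f g y Hf Hg ltac:(lra)).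
    assert (Hlt := PL0_lt f (g y) (g x) Hf ltac:(lra) H ltac:(lra)).
    rewrite (proj2 (Hg x ltac:(lra))), (proj2 (Hg y ltac:(lra))) in Hlt. lra. }
  intros x y Hx Hxy Hy.
  assert (Hgx := inverse_in_I f g x Hf Hg ltac:(lra)).
  assert (Hgy := inverse_in_I f g y Hf Hg ltac:(lra)).
  split; [lra|split; [apply Hle; lra|lra]].
Qed.

Lemma increasing_comp (h k : R -> R) :
  increasing_on_I h -> increasing_on_I k -> increasing_on_I (fun s => k (h s)).
Proof.
  intros Hh Hk x y Hx Hxy Hy.
  destruct (Hh x y Hx Hxy Hy) as [Hhx [Hhxy Hhy]].
  apply Hk; assumption.
Qed.

Lemma increasing_on_I_between (h : R -> R) (u s v : R) :
  increasing_on_I h -> 0 <= u -> u <= s <= v -> v <= 1 ->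
  0 <= h s <= 1 /\ h u <= h s <= h v.
Proof.
  intros Hh Hu Hs Hv.
  destruct (Hh u s Hu ltac:(lra) ltac:(lra)) as [Hhu [Hus Hhs]].
  destruct (Hh s v ltac:(lra) ltac:(lra) Hv) as [_ [Hsv _]].
  split; split; lra.
Qed.

Lemma comm_act_fixed_of_disjoint_supports (X Xi Y Yi : R -> R) (A B : R -> Prop) (t : R) :
  A t \/ B t ->
  (forall s, B s -> X s = s /\ Xi s = s) ->
  (forall s, A s -> Y s = s /\ Yi s = s) ->
  (forall s, A s -> A (X s) /\ Xi (X s) = s) ->
  (forall s, B s -> B (Y s) /\ Yi (Y s) = s) ->
  comm_act X Xi Y Yi t = t.
Proof.
  unfold comm_act. intros [HA|HB] HXB HYA HXA HYB.
  - destruct (HXA t HA) as [HAX HXiX].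
    rewrite (proj1 (HYA _ HAX)), HXiX. apply (HYA t HA).
  - destruct (HYB t HB) as [HBY HYiY].
    rewrite (proj1 (HXB t HB)), (proj2 (HXB _ HBY)). exact HYiY.
Qed.

Lemma listed_orbitals_sorted (b d : nat -> R) (n : nat) :
  (forall i, (i < n)%nat -> b i < d i) -> (forall i, (S i < n)%nat -> d i <= b (S i)) ->
  forall i j, (i <= j < n)%nat -> b i <= b j /\ d i <= d j.
Proof.
  intros Hbd Hdb i j [Hij Hjn]. revert Hjn.
  induction Hij as [|j Hij IH]; intros Hjn; [lra|].
  assert (d j <= b (S j)) by (apply Hdb; lia).
  assert (b j < d j) by (apply Hbd; lia).
  assert (b (S j) < d (S j)) by (apply Hbd; lia).
  specialize (IH ltac:(lia)). lra.
Qed.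

Lemma PL0_fixed_off_listed_orbitals (f : R -> R) (a c : R) (n : nat) (b d : nat -> R) (s : R) :
  PL0 f ->
  (forall u v, orbital f u v -> (a <= u /\ v <= c) \/ (v <= a \/ c <= u)) ->
  (forall u v, orbital f u v -> a <= u -> v <= c ->
     exists i, (i < n)%nat /\ u = b i /\ v = d i) ->
  0 <= s <= 1 -> a <= s <= c -> (forall i, (i < n)%nat -> s <= b i \/ d i <= s) ->
  f s = s.
Proof.
  intros Hf Hdich Hall Hs Hsac Hoff.
  destruct (Req_dec (f s) s) as [Hfs|Hfs]; [exact Hfs|exfalso].
  destruct (PL0_orbital_around f s Hf Hs Hfs) as [u [v [Huv Hsuv]]].
  destruct (Hdich u v Huv) as [[Hau Hvc]|Hout]; [|lra].
  destruct (Hall u v Huv Hau Hvc) as [i [Hi [-> ->]]].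
  destruct (Hoff i Hi); lra.
Qed.

Section Commutator.

Variables f0 f1 g0 g1 : R -> R.
Hypothesis Hf0 : PL0 f0.
Hypothesis Hf1 : PL0 f1.
Hypothesis Hg0 : inverse_on_I f0 g0.
Hypothesis Hg1 : inverse_on_I f1 g1.

Let inc_f0 := PL0_increasing f0 Hf0.
Let inc_f1 := PL0_increasing f1 Hf1.
Let inc_g1 := inverse_increasing f1 g1 Hf1 Hg1.
Let inc_g0g0 := increasing_comp g0 g0 (inverse_increasing f0 g0 Hf0 Hg0)
                  (inverse_increasing f0 g0 Hf0 Hg0).
Let inc_f0f0 := increasing_comp f0 f0 inc_f0 inc_f0.

Lemma f0_f0_g0_g0 (s : R) : 0 <= s <= 1 -> f0 (f0 (g0 (g0 s))) = s.
Proof.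
  intros Hs. assert (Hgs := inverse_in_I f0 g0 s Hf0 Hg0 Hs).
  rewrite (proj2 (Hg0 _ Hgs)). apply (Hg0 s Hs).
Qed.

Lemma g0_g0_f0_f0 (s : R) : 0 <= s <= 1 -> g0 (g0 (f0 (f0 s))) = s.
Proof.
  intros Hs. destruct (inc_f0 s s ltac:(lra) ltac:(lra) ltac:(lra)) as [Hfs [_ Hfs1]].
  rewrite (proj1 (Hg0 (f0 s) ltac:(lra))). apply (Hg0 s Hs).
Qed.

Lemma comm_act_fixed_of_cover (u1 v1 u2 v2 t : R) :
  0 <= u1 -> v1 <= 1 -> 0 <= u2 -> v2 <= 1 ->
  u1 <= t <= v1 \/ u2 <= t <= v2 ->
  f0 u1 = f1 u1 -> f0 v1 = f1 v1 ->
  (forall s, g0 (g0 u1) <= s <= g0 (g0 v1) -> f1 s = s) ->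
  agree_on f0 f1 u2 v2 ->
  f1 (g0 (g0 u2)) = g0 (g0 u2) -> f1 (g0 (g0 v2)) = g0 (g0 v2) ->
  comm_act (fun s => g1 (f0 s)) (fun s => g0 (f1 s))
           (fun s => f0 (f0 (f1 (g0 (g0 s))))) (fun s => f0 (f0 (g1 (g0 (g0 s))))) t = t.
Proof.
  intros Hu1 Hv1 Hu2 Hv2 Ht Hfu1 Hfv1 Hfix1 Hagr2 Hfu2 Hfv2.
  apply (comm_act_fixed_of_disjoint_supports _ _ _ _
           (fun s => u1 <= s <= v1) (fun s => u2 <= s <= v2)); cbv beta.
  - exact Ht.
  - intros s Hs. rewrite (Hagr2 s Hs) at 1. rewrite <- (Hagr2 s Hs) at 2.
    split; [apply Hg1|apply Hg0]; lra.
  - intros s Hs.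
    destruct (increasing_on_I_between _ u1 s v1 inc_g0g0) as [Hw Hwb]; try lra.
    assert (Hfw := Hfix1 _ Hwb).
    rewrite Hfw, f0_f0_g0_g0 by lra. split; [reflexivity|].
    rewrite <- Hfw at 1. rewrite (proj1 (Hg1 _ Hw)). apply f0_f0_g0_g0. lra.
  - intros s Hs.
    destruct (increasing_on_I_between _ u1 s v1 inc_f0) as [Hfs Hfsb]; try lra.
    destruct (inc_f1 u1 v1) as [Hf1u1 [_ Hf1v1]]; try lra.
    rewrite Hfu1, Hfv1 in Hfsb.
    destruct (increasing_on_I_between _ _ _ _ inc_g1 Hf1u1 Hfsb Hf1v1) as [_ Hgb].
    rewrite (proj1 (Hg1 u1 ltac:(lra))), (proj1 (Hg1 v1 ltac:(lra))) in Hgb.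
    split; [exact Hgb|].
    rewrite (proj2 (Hg1 _ Hfs)). apply Hg0. lra.
  - intros s Hs.
    destruct (inc_g0g0 u2 v2) as [Hgu2 [_ Hgv2]]; try lra.
    destruct (increasing_on_I_between _ u2 s v2 inc_g0g0) as [Hw Hwb]; try lra.
    destruct (increasing_on_I_between _ _ _ _ inc_f1 Hgu2 Hwb Hgv2) as [Hfw Hfwb].
    rewrite Hfu2, Hfv2 in Hfwb.
    destruct (increasing_on_I_between _ _ _ _ inc_f0f0 Hgu2 Hfwb Hgv2) as [_ Hb].
    rewrite !f0_f0_g0_g0 in Hb by lra.
    split; [exact Hb|].
    rewrite g0_g0_f0_f0 by exact Hfw. rewrite (proj1 (Hg1 _ Hw)).
    apply f0_f0_g0_g0. lra.
Qed.

Lemma g0_g0_lt (s x : R) : 0 <= s <= 1 -> 0 <= x <= 1 -> s < f0 (f0 x) -> g0 (g0 s) < x.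
Proof.
  intros Hs Hx Hsx. destruct (Rlt_or_le (g0 (g0 s)) x) as [H|H]; [exact H|exfalso].
  destruct (inc_f0f0 x (g0 (g0 s))) as [_ [Hle _]]; try lra.
  - destruct (inc_g0g0 s s) as [_ [_ Hg]]; lra.
  - rewrite f0_f0_g0_g0 in Hle by exact Hs. lra.
Qed.

Lemma lt_g0_g0 (s x : R) : 0 <= s <= 1 -> 0 <= x <= 1 -> f0 (f0 x) < s -> x < g0 (g0 s).
Proof.
  intros Hs Hx Hsx. destruct (Rlt_or_le x (g0 (g0 s))) as [H|H]; [exact H|exfalso].
  destruct (inc_f0f0 (g0 (g0 s)) x) as [_ [Hle _]]; try lra.
  - destruct (inc_g0g0 s s) as [Hg _]; lra.
  - rewrite f0_f0_g0_g0 in Hle by exact Hs. lra.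
Qed.

Section ListedOrbitals.

Variables (a c : R) (n : nat) (b d : nat -> R).
Hypothesis Horb : orbital f0 a c.
Hypothesis Hdich : forall u v, orbital f1 u v -> (a <= u /\ v <= c) \/ (v <= a \/ c <= u).
Hypothesis Hn : (1 <= n)%nat.
Hypothesis Hbd : forall i, (i < n)%nat -> orbital f1 (b i) (d i) /\ a <= b i /\ d i <= c.
Hypothesis Hdb : forall i, (S i < n)%nat -> d i <= b (S i).
Hypothesis Hall : forall u v, orbital f1 u v -> a <= u -> v <= c ->
  exists i, (i < n)%nat /\ u = b i /\ v = d i.

Lemma orbital_bounds : 0 <= a /\ a < c /\ c <= 1 /\ f0 a = a /\ f0 c = c.
Proof.
  destruct Horb as [Ha [Hac [Hc [_ [Hna Hnc]]]]].
  assert (Hfix : forall x, 0 <= x <= 1 -> ~ in_supp f0 x -> f0 x = x).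
  { intros x Hx Hnx. destruct (Req_dec (f0 x) x) as [H|H]; [exact H|].
    exfalso. apply Hnx. split; assumption. }
  repeat split; try lra; apply Hfix; auto; lra.
Qed.

Let listed_sorted := listed_orbitals_sorted b d n
  (fun i Hi => proj1 (proj2 (proj1 (Hbd i Hi)))) Hdb.

Lemma g0_g0_fixed (x : R) : 0 <= x <= 1 -> f0 x = x -> g0 (g0 x) = x.
Proof.
  intros Hx Hfx. pose proof (g0_g0_f0_f0 x Hx) as Hgf.
  rewrite !Hfx in Hgf. exact Hgf.
Qed.

Lemma comm_act_fixed_up (t : R) :
  up_bump f0 a c -> a < b 0%nat ->
  (exists p, 0 <= p /\ p < c /\ agree_on f0 f1 p c) ->
  (forall p, 0 <= p -> p < c -> agree_on f0 f1 p c ->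
     (forall q, 0 <= q -> q < c -> agree_on f0 f1 q c -> p <= q) ->
     f0 (b (pred n)) >= p) ->
  f0 (b 0%nat) > b (pred n) ->
  a <= t <= c ->
  comm_act (fun s => g1 (f0 s)) (fun s => g0 (f1 s))
           (fun s => f0 (f0 (f1 (g0 (g0 s))))) (fun s => f0 (f0 (g1 (g0 (g0 s))))) t = t.
Proof.
  intros [_ Hup] Hab0 [p0 [Hp0 [Hp0c Hagr0]]] Hleast Hb0bN Ht.
  destruct orbital_bounds as [Ha [Hac [Hc [Hfa Hfc]]]].
  set (N := pred n) in *.
  destruct (Hbd 0%nat ltac:(lia)) as [[_ [Hb0d0 _]] [_ Hd0c]].
  destruct (Hbd N ltac:(lia)) as [[_ [HbNdN _]] [HabN HdNc]].
  destruct (agree_on_least f0 f1 p0 c Hf0 Hf1 ltac:(lra) Hc Hagr0)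
    as [p [Hp [Hagr Hmin]]].
  assert (HpbN := Hleast p ltac:(lra) ltac:(lra) Hagr Hmin).
  assert (Hfix : forall s, a <= s < b 0%nat -> f1 s = s).
  { intros s Hs. apply (PL0_fixed_off_listed_orbitals f1 a c n b d); auto; try lra.
    intros i Hi. left. destruct (listed_sorted 0%nat i ltac:(lia)). lra. }
  set (P := Rmax a p).
  assert (HaP : a <= P) by apply Rmax_l. assert (HpP : p <= P) by apply Rmax_r.
  assert (HPc : P < c) by (apply Rmax_lub_lt; lra).
  assert (Hb0 : b 0%nat < f0 (b 0%nat)) by (apply Hup; lra).
  assert (Hfb0c : f0 (b 0%nat) < c) by (rewrite <- Hfc; apply PL0_lt; auto; lra).
  assert (HfbN : f0 (b N) < f0 (f0 (b 0%nat))) by (apply PL0_lt; auto; lra).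
  assert (Hfb0 : f0 (b 0%nat) < f0 (f0 (b 0%nat))) by (apply Hup; lra).
  assert (HP : P < f0 (f0 (b 0%nat))) by (apply Rmax_lub_lt; lra).
  assert (HgP := g0_g0_lt P (b 0%nat) ltac:(lra) ltac:(lra) HP).
  destruct (inc_g0g0 a P) as [_ [HgaP _]]; try lra.
  rewrite (g0_g0_fixed a) in HgaP by (auto; lra).
  apply (comm_act_fixed_of_cover a P P c);
    try lra; try (apply Hagr; lra).
  - rewrite Hfa, Hfix by lra. reflexivity.
  - intros s Hs. rewrite (g0_g0_fixed a) in Hs by (auto; lra). apply Hfix. lra.
  - intros x Hx. apply Hagr. lra.
  - apply Hfix. lra.
  - rewrite (g0_g0_fixed c) by (auto; lra). rewrite <- (Hagr c) by lra. exact Hfc.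
Qed.

Lemma comm_act_fixed_down (t : R) :
  down_bump f0 a c -> d (pred n) < c ->
  (exists rho, a < rho /\ rho <= 1 /\ agree_on f0 f1 a rho) ->
  (forall rho, a < rho -> rho <= 1 -> agree_on f0 f1 a rho ->
     (forall q, a < q -> q <= 1 -> agree_on f0 f1 a q -> q <= rho) ->
     f0 (d 0%nat) <= rho) ->
  f0 (d (pred n)) < d 0%nat ->
  a <= t <= c ->
  comm_act (fun s => g1 (f0 s)) (fun s => g0 (f1 s))
           (fun s => f0 (f0 (f1 (g0 (g0 s))))) (fun s => f0 (f0 (g1 (g0 (g0 s))))) t = t.
Proof.
  intros [_ Hdown] HdNc [r0 [Hr0 [Hr01 Hagr0]]] Hgreatest Hd0dN Ht.
  destruct orbital_bounds as [Ha [Hac [Hc [Hfa Hfc]]]].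
  set (N := pred n) in *.
  destruct (Hbd 0%nat ltac:(lia)) as [[_ [Hb0d0 _]] [_ Hd0c]].
  destruct (Hbd N ltac:(lia)) as [[_ [HbNdN _]] [HabN _]].
  destruct (agree_on_greatest f0 f1 a r0 Hf0 Hf1 Ha ltac:(lra) Hagr0)
    as [r [Hr [Hagr Hmax]]].
  assert (Hd0r := Hgreatest r ltac:(lra) ltac:(lra) Hagr Hmax).
  assert (Hfix : forall s, d N < s <= c -> f1 s = s).
  { intros s Hs. apply (PL0_fixed_off_listed_orbitals f1 a c n b d); auto; try lra.
    intros i Hi. right. destruct (listed_sorted i N ltac:(lia)). lra. }
  set (Q := Rmin c r).
  assert (HRc : Q <= c) by apply Rmin_l. assert (HRr : Q <= r) by apply Rmin_r.
  assert (HaR : a < Q) by (apply Rmin_glb_lt; lra).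
  assert (HfdN : f0 (d N) < d N) by (apply Hdown; lra).
  assert (HafdN : a < f0 (d N)) by (rewrite <- Hfa; apply PL0_lt; auto; lra).
  assert (Hffd : f0 (f0 (d N)) < f0 (d N)) by (apply Hdown; lra).
  assert (Hffd0 : f0 (f0 (d N)) < f0 (d 0%nat)) by (apply PL0_lt; auto; lra).
  assert (HR : f0 (f0 (d N)) < Q) by (apply Rmin_glb_lt; lra).
  assert (HgR := lt_g0_g0 Q (d N) ltac:(lra) ltac:(lra) HR).
  destruct (inc_g0g0 Q c) as [_ [HgRc _]]; try lra.
  rewrite (g0_g0_fixed c) in HgRc by (auto; lra).
  assert (Hf1c : f1 c = c) by (apply Hfix; lra).
  apply (comm_act_fixed_of_cover Q c a Q);
    try lra; try (apply Hagr; lra).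
  - intros s Hs. rewrite (g0_g0_fixed c) in Hs by (auto; lra). apply Hfix. lra.
  - intros x Hx. apply Hagr. lra.
  - rewrite (g0_g0_fixed a) by (auto; lra). rewrite <- (Hagr a) by lra. exact Hfa.
  - apply Hfix. lra.
Qed.

End ListedOrbitals.

End Commutator.

Theorem lemma2p7 (f0 f1 g0 g1 : R -> R) (a c : R) (n : nat) (b d : nat -> R) :
  PL0 f0 -> PL0 f1 ->
  inverse_on_I f0 g0 -> inverse_on_I f1 g1 ->
  orbital f0 a c -> ~ orbital f1 a c ->
  (forall u v, orbital f1 u v ->
     (a <= u /\ v <= c) \/ (v <= a \/ c <= u)) ->
  (1 <= n)%nat ->
  (forall i, (i < n)%nat -> orbital f1 (b i) (d i) /\ a <= b i /\ d i <= c) ->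
  (forall i, (S i < n)%nat -> d i <= b (S i)) ->
  (forall u v, orbital f1 u v -> a <= u -> v <= c ->
     exists i, (i < n)%nat /\ u = b i /\ v = d i) ->
  ( (up_bump f0 a c /\
     a < b 0%nat /\
     (exists p, 0 <= p /\ p < c /\ agree_on f0 f1 p c) /\
     d (pred n) = c /\
     (forall p, 0 <= p -> p < c -> agree_on f0 f1 p c ->
        (forall q, 0 <= q -> q < c -> agree_on f0 f1 q c -> p <= q) ->
        f0 (b (pred n)) >= p) /\
     f0 (b 0%nat) > b (pred n))
  \/
    (down_bump f0 a c /\
     d (pred n) < c /\
     (exists rho, a < rho /\ rho <= 1 /\ agree_on f0 f1 a rho) /\
     b 0%nat = a /\
     (forall rho, a < rho -> rho <= 1 -> agree_on f0 f1 a rho ->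
        (forall q, a < q -> q <= 1 -> agree_on f0 f1 a q -> q <= rho) ->
        f0 (d 0%nat) <= rho) /\
     f0 (d (pred n)) < d 0%nat) ) ->
  forall t, a <= t <= c ->
    comm_act (fun s => g1 (f0 s))            (* x = f0 f1^-1 *)
             (fun s => g0 (f1 s))            (* x^-1 = f1 f0^-1 *)
             (fun s => f0 (f0 (f1 (g0 (g0 s)))))   (* y = f0^-2 f1 f0^2 *)
             (fun s => f0 (f0 (g1 (g0 (g0 s)))))   (* y^-1 = f0^-2 f1^-1 f0^2 *)
             t = t.
Proof.
  intros Hf0 Hf1 Hg0 Hg1 Horb _ Hdich Hn Hbd Hdb Hall
    [[Hup [Hab0 [Hp [_ [Hleast Hb0bN]]]]] | [Hdown [HdNc [Hrho [_ [Hgreatest Hd0dN]]]]]] t Ht.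
  - eapply comm_act_fixed_up; eassumption.
  - eapply comm_act_fixed_down; eassumption.
Qed.
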